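(* Let $\kappa$ be a fixed grounding calculus and let $\delta$ be a grounding derivation of a formula $A$ in $\kappa$. Let $\Gamma$ be the list of all grounds and $\Delta$ the list of all conditions occurring in a bar of $\delta$. Then the mediate grounding claim $\Gamma[\Delta]\gg A$ is derivable in any calculus that contains the rules of $\kappa$, the rules for the immediate grounding operator $\blacktriangleright$, and the rules for the mediate grounding operator $\gg$.
   Context: A grounding calculus $\kappa$ is a natural-deduction system whose grounding rules have the form: from premisses $A_1,\dots,A_n$ (the ground) and a possibly empty list of premisses $[C_1,\dots,C_m]$ (the conditions) infer $B$; an application expresses that $A_1,\dots,A_n$ form a ground of $B$ under the conditions $C_1,\dots,C_m$. In a derivation, a formula occurrence that is a premiss of a grounding rule application in a condition position is a condition, otherwise a ground. The language contains propositional variables, $\bot,\neg,\wedge,\vee,\to$, and grounding formulae $\Gamma[\Delta]\blacktriangleright A$ and $\Gamma[\Delta]\gg A$ with $\Gamma,\Delta$ finite lists of formulae ($\Delta$ possibly empty, in which case one writes $\Gamma\blacktriangleright A$, $\Gamma\gg A$). Rules for $\blacktriangleright$: Introduction: if an application of a grounding rule of $\kappa$ with premisses $A_1,\dots,A_n,[C_1,\dots,C_m]$ and conclusion $B$ occurs (with arbitrary derivations of its premisses), one may infer $A_1,\dots,A_n[C_1,\dots,C_m]\blacktriangleright B$ immediately below it. Eliminations: from $\Gamma[\Delta]\blacktriangleright B$ infer $B$, any element of $\Gamma$, any element of $\Delta$; and from $A_1,\dots,A_n[C_1,\dots,C_m]\blacktriangleright B$ infer $\bot$ whenever there is no grounding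 rule application with premisses $A_1,\dots,A_n,[C_1,\dots,C_m]$ and conclusion $B$. Rules for $\gg$: Introductions: from $\Gamma[\Delta]\blacktriangleright A$ infer $\Gamma[\Delta]\gg A$; from $\Gamma[\Delta]\gg A$ and $\Gamma_1,A,\Gamma_2[\Delta_1]\gg B$ infer $\Gamma_1,\Gamma,\Gamma_2[\Delta,\Delta_1]\gg B$; from $\Gamma[\Delta]\gg A$ and $\Gamma_1[\Delta_1,A,\Delta_2]\gg B$ infer $\Gamma_1[\Delta_1,\Gamma,\Delta,\Delta_2]\gg B$. Eliminations: from $\Gamma[\Delta]\gg B$ infer $B$, any element of $\Gamma$, and any element of $\Delta$. A grounding derivation is a derivation constructed by exclusively applying grounding rules of $\kappa$ to a set of consistent hypotheses and containing at least one rule application. For a derivation $\delta$ (each step having one or more premisses and one conclusion), its derivation-tree $t(\delta)$ is the tree whose nodes correspond one-to-one to the formula occurrences of $\delta$, with the root corresponding to the conclusion and the children of a node corresponding one-to-one to the premisses of the step whose conclusion is that node. A bar of $\delta$ is a set of formula occurrences of $\delta$ not containing the conclusion of $\delta$ and whose corresponding nodes share exactly one element with each path from the root of $t(\delta)$ to one of its leaves. *)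

From Stdlib Require Import List Arith Permutation.
Import ListNotations.

Inductive form : Type :=
  | Var : nat -> form
  | Bot : form
  | Neg : form -> form
  | And : form -> form -> form
  | Or  : form -> form -> form
  | Imp : form -> form -> form
  | IG  : list form -> list form -> form -> form   (* Γ[Δ] ▶ A *)
  | MG  : list form -> list form -> form -> form.  (* Γ[Δ] ≫ A *)

(* A grounding calculus kappa is given by its grounding rule applications:
   [kappa As Cs B] holds iff there is an application of a grounding rule of
   kappa with ground premisses As, condition premisses Cs and conclusion B. *)
Definition grounding_calculus := list form -> list form -> form -> Prop.

(* Derivations built from grounding rule applications:
   a leaf is a hypothesis; a node has ground subderivations [gs], condition
   subderivations [cs], and conclusion [B]. *)
Inductive gtree : Type :=
  | Hyp : form -> gtree
  | App : list gtree -> list gtree -> form -> gtree.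

Definition concl (t : gtree) : form :=
  match t with Hyp A => A | App _ _ B => B end.

Inductive kappa_steps (kappa : grounding_calculus) : gtree -> Prop :=
  | ks_hyp : forall A, kappa_steps kappa (Hyp A)
  | ks_app : forall gs cs B,
      kappa (map concl gs) (map concl cs) B ->
      (forall t, In t gs -> kappa_steps kappa t) ->
      (forall t, In t cs -> kappa_steps kappa t) ->
      kappa_steps kappa (App gs cs B).

Fixpoint hyps (t : gtree) : list form :=
  match t with
  | Hyp A => [A]
  | App gs cs _ => flat_map hyps gs ++ flat_map hyps cs
  end.

(* Consistency of a set of hypotheses: classical satisfiability, where the
   grounding formulae are treated as (independent) atoms. *)
Fixpoint eval (v : nat -> bool) (w : form -> bool) (f : form) : bool :=
  match f with
  | Var n => v n
  | Bot => false
  | Neg a => negb (eval v w a)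
  | And a b => eval v w a && eval v w b
  | Or a b => eval v w a || eval v w b
  | Imp a b => implb (eval v w a) (eval v w b)
  | IG _ _ _ => w f
  | MG _ _ _ => w f
  end.

Definition consistent (H : list form) : Prop :=
  exists (v : nat -> bool) (w : form -> bool), forall A, In A H -> eval v w A = true.

Definition grounding_derivation (kappa : grounding_calculus) (delta : gtree)
    (A : form) : Prop :=
  kappa_steps kappa delta /\
  consistent (hyps delta) /\
  (exists gs cs, delta = App gs cs A)   (* at least one rule application *).

(* Formula occurrences = positions in the derivation tree t(delta).
   The children of [App gs cs B] are indexed 0.. in the order [gs ++ cs]. *)
Definition position := list nat.

Fixpoint subtree (t : gtree) (p : position) : option gtree :=
  match p with
  | [] => Some t
  | i :: p' =>
      match t with
      | Hyp _ => None
      | App gs cs _ =>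
          match nth_error (gs ++ cs) i with
          | Some s => subtree s p'
          | None => None
          end
      end
  end.

Definition children (t : gtree) : list gtree :=
  match t with Hyp _ => [] | App gs cs _ => gs ++ cs end.

Definition valid_pos (t : gtree) (p : position) : Prop := subtree t p <> None.

Definition leaf_pos (t : gtree) (q : position) : Prop :=
  exists s, subtree t q = Some s /\ children s = [].

Definition is_prefix (p q : position) : Prop := exists r, q = p ++ r.

(* A bar: a set (duplicate-free list) of occurrences, not containing the
   conclusion, sharing exactly one element with each root-to-leaf path
   (the nodes of the path to leaf position q are the prefixes of q). *)
Definition is_bar (t : gtree) (bar : list position) : Prop :=
  NoDup bar /\
  (forall p, In p bar -> valid_pos t p /\ p <> []) /\
  (forall q, leaf_pos t q ->
     exists p, In p bar /\ is_prefix p q /\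
       forall p', In p' bar -> is_prefix p' q -> p' = p).

Fixpoint in_cond (t : gtree) (p : position) : bool :=
  match p with
  | [] => false
  | i :: p' =>
      match t with
      | Hyp _ => false
      | App gs cs _ =>
          if i <? length gs then
            match nth_error gs i with
            | Some s => in_cond s p'
            | None => false
            end
          else true
      end
  end.

Definition formula_at (t : gtree) (p : position) : form :=
  match subtree t p with Some s => concl s | None => Bot end.

Definition bar_grounds (t : gtree) (bar : list position) : list form :=
  map (formula_at t) (filter (fun p => negb (in_cond t p)) bar).

Definition bar_conds (t : gtree) (bar : list position) : list form :=
  map (formula_at t) (filter (fun p => in_cond t p) bar).

(* Derivability in a calculus containing the rules of kappa, the rules for
   IG (▶), the rules for MG (≫), and arbitrary further rules [extra]
   ([extra Ps B]: an extra rule instance with premisses Ps, conclusion B),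
   from the hypotheses H. *)
Inductive derivable (kappa : grounding_calculus)
    (extra : list form -> form -> Prop) (H : form -> Prop) : form -> Prop :=
  | d_hyp : forall A, H A -> derivable kappa extra H A
  | d_kappa : forall As Cs B, kappa As Cs B ->
      (forall X, In X As -> derivable kappa extra H X) ->
      (forall X, In X Cs -> derivable kappa extra H X) ->
      derivable kappa extra H B
  | d_IG_intro : forall As Cs B, kappa As Cs B ->
      (forall X, In X As -> derivable kappa extra H X) ->
      (forall X, In X Cs -> derivable kappa extra H X) ->
      derivable kappa extra H (IG As Cs B)
  | d_IG_elim_concl : forall G D B,
      derivable kappa extra H (IG G D B) -> derivable kappa extra H B
  | d_IG_elim_ground : forall G D B X,
      derivable kappa extra H (IG G D B) -> In X G -> derivable kappa extra H X
  | d_IG_elim_cond : forall G D B X,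
      derivable kappa extra H (IG G D B) -> In X D -> derivable kappa extra H X
  | d_IG_elim_bot : forall As Cs B,
      derivable kappa extra H (IG As Cs B) -> ~ kappa As Cs B ->
      derivable kappa extra H Bot
  | d_MG_intro : forall G D A,
      derivable kappa extra H (IG G D A) -> derivable kappa extra H (MG G D A)
  | d_MG_trans_ground : forall G D A G1 G2 D1 B,
      derivable kappa extra H (MG G D A) ->
      derivable kappa extra H (MG (G1 ++ A :: G2) D1 B) ->
      derivable kappa extra H (MG (G1 ++ G ++ G2) (D ++ D1) B)
  | d_MG_trans_cond : forall G D A G1 D1 D2 B,
      derivable kappa extra H (MG G D A) ->
      derivable kappa extra H (MG G1 (D1 ++ A :: D2) B) ->
      derivable kappa extra H (MG G1 (D1 ++ G ++ D ++ D2) B)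
  | d_MG_elim_concl : forall G D B,
      derivable kappa extra H (MG G D B) -> derivable kappa extra H B
  | d_MG_elim_ground : forall G D B X,
      derivable kappa extra H (MG G D B) -> In X G -> derivable kappa extra H X
  | d_MG_elim_cond : forall G D B X,
      derivable kappa extra H (MG G D B) -> In X D -> derivable kappa extra H X
  | d_extra : forall Ps B, extra Ps B ->
      (forall X, In X Ps -> derivable kappa extra H X) ->
      derivable kappa extra H B.

From Stdlib Require Import List Permutation Arith Lia.
Import ListNotations.

(* At an application of a rule with ground
   premisses [gs], condition premisses [cs] and conclusion [B], the
   introduction rules for ▶ and ≫ give [map concl gs [map concl cs] ≫ B].
   Above each premiss the bar either passes through the premiss itself or
   restricts to a bar of its subderivation, which by induction yields a claim
   [Γi[Δi] ≫ premiss]; the two transitivity rules for ≫ substitute these claims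
   for the premisses. Above a ground premiss, grounds stay grounds and
   conditions stay conditions; everything above a condition premiss becomes a
   condition. The transitivity rules fix the lists only up to order, so claims
   are tracked up to permutation. *)

Lemma Permutation_filter {A : Type} (f : A -> bool) (l l' : list A) :
  Permutation l l' -> Permutation (filter f l) (filter f l').
Proof.
  induction 1 as [| x l l' _ IH | x y l | l l' l'' _ IH1 _ IH2]; simpl.
  - constructor.
  - destruct (f x); auto.
  - destruct (f x), (f y); auto using perm_swap, Permutation_refl.
  - eauto using Permutation_trans.
Qed.

Lemma Permutation_map_filter_partition {A B : Type} (c : A -> bool) (g : A -> B)
    (l : list A) :
  Permutation (map g l)
    (map g (filter (fun x => negb (c x)) l) ++ map g (filter c l)).
Proof.
  induction l as [| x l IH]; simpl; auto.
  destruct (c x); simpl; auto.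
  rewrite <- Permutation_middle. auto.
Qed.

Lemma Permutation_flat_map_ext {A B : Type} (f g : A -> list B) (l : list A) :
  (forall x, In x l -> Permutation (f x) (g x)) ->
  Permutation (flat_map f l) (flat_map g l).
Proof.
  induction l as [| x l IH]; intros Hfg; simpl; auto.
  apply Permutation_app; auto using in_eq, in_cons.
Qed.

Lemma Permutation_flat_map_insert {A : Type} (x : A) (F : nat -> list A) j l :
  NoDup l -> In j l ->
  Permutation (flat_map (fun i => if i =? j then x :: F i else F i) l)
    (x :: flat_map F l).
Proof.
  induction 1 as [| k l Hk Hl IH]; intros Hj; [destruct Hj|]; simpl.
  destruct (Nat.eqb_spec k j) as [-> | Hkj].
  - apply perm_skip, Permutation_app_head, Permutation_flat_map_ext.
    intros i Hi. destruct (Nat.eqb_spec i j); [congruence | reflexivity].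
  - destruct Hj as [-> | Hj]; [congruence|].
    rewrite IH by exact Hj. apply Permutation_sym, Permutation_middle.
Qed.

Lemma map_nth_seq_app {A : Type} (d : A) (l1 l l2 : list A) :
  map (fun i => nth i (l1 ++ l ++ l2) d) (seq (length l1) (length l)) = l.
Proof.
  induction l1 as [| y l1 IH]; simpl.
  - induction l as [| x l IH]; simpl; [reflexivity|].
    f_equal. rewrite <- seq_shift, map_map. exact IH.
  - rewrite <- seq_shift, map_map. exact IH.
Qed.

Section MediateGrounding.

Variables (kappa : grounding_calculus) (H : form -> Prop).

Definition mg_derivable (G D : list form) (A : form) : Prop :=
  exists G' D', Permutation G' G /\ Permutation D' D /\
    forall extra, derivable kappa extra H (MG G' D' A).

(* No rule derives [[A] ≫ A]; the trivial alternative covers a bar passing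
   through the premiss itself. *)
Definition mg_derivable_refl (G D : list form) (A : form) : Prop :=
  (G = [A] /\ D = []) \/ mg_derivable G D A.

Lemma mg_derivable_perm G D G' D' A :
  Permutation G G' -> Permutation D D' -> mg_derivable G D A -> mg_derivable G' D' A.
Proof.
  intros HG HD (G0 & D0 & HG0 & HD0 & Hder).
  exists G0, D0. eauto using Permutation_trans.
Qed.

Lemma mg_derivable_trans_ground G D A G1 D1 B :
  mg_derivable G D A -> mg_derivable (A :: G1) D1 B ->
  mg_derivable (G ++ G1) (D ++ D1) B.
Proof.
  intros (G' & D' & HG' & HD' & HA) (G'' & D'' & HG'' & HD'' & HB).
  destruct (Permutation_vs_cons_inv HG'') as (l1 & l2 & ->).
  exists (l1 ++ G' ++ l2), (D' ++ D''). repeat split.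
  - rewrite Permutation_app_swap_app, HG'. apply Permutation_app_head.
    symmetry. apply Permutation_cons_app_inv with A. symmetry. exact HG''.
  - apply Permutation_app; assumption.
  - intros extra. apply d_MG_trans_ground with A; auto.
Qed.

Lemma mg_derivable_trans_cond G D A G1 D1 B :
  mg_derivable G D A -> mg_derivable G1 (A :: D1) B ->
  mg_derivable G1 (G ++ D ++ D1) B.
Proof.
  intros (G' & D' & HG' & HD' & HA) (G'' & D'' & HG'' & HD'' & HB).
  destruct (Permutation_vs_cons_inv HD'') as (l1 & l2 & ->).
  exists G'', (l1 ++ G' ++ D' ++ l2). repeat split; [assumption | |].
  - rewrite (app_assoc G' D' l2), Permutation_app_swap_app, HG', HD', <- app_assoc.
    do 2 apply Permutation_app_head.
    symmetry. apply Permutation_cons_app_inv with A. symmetry. exact HD''.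
  - intros extra. apply d_MG_trans_cond with A; auto.
Qed.

Lemma mg_derivable_subst_grounds {I : Type} (a : I -> form) (g d : I -> list form)
    (idx : list I) G D B :
  (forall i, In i idx -> mg_derivable_refl (g i) (d i) (a i)) ->
  mg_derivable (map a idx ++ G) D B ->
  mg_derivable (flat_map g idx ++ G) (flat_map d idx ++ D) B.
Proof.
  revert G D. induction idx as [| i idx IH]; intros G D Hsub HB; simpl; [exact HB|].
  assert (Hi : mg_derivable (g i ++ map a idx ++ G) (d i ++ D) B).
  { destruct (Hsub i (in_eq i idx)) as [[-> ->] | Hsubi]; [exact HB|].
    eapply mg_derivable_trans_ground; [exact Hsubi | exact HB]. }
  rewrite <- !app_assoc.
  apply mg_derivable_perm with (flat_map g idx ++ g i ++ G) (flat_map d idx ++ d i ++ D);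
    try apply Permutation_app_swap_app.
  apply IH; [auto using in_cons|].
  apply mg_derivable_perm with (g i ++ map a idx ++ G) (d i ++ D);
    [apply Permutation_app_swap_app | reflexivity | exact Hi].
Qed.

Lemma mg_derivable_subst_conds {I : Type} (a : I -> form) (g d : I -> list form)
    (idx : list I) G D B :
  (forall i, In i idx -> mg_derivable_refl (g i) (d i) (a i)) ->
  mg_derivable G (map a idx ++ D) B ->
  mg_derivable G (flat_map (fun i => g i ++ d i) idx ++ D) B.
Proof.
  revert D. induction idx as [| i idx IH]; intros D Hsub HB; simpl; [exact HB|].
  assert (Hi : mg_derivable G (g i ++ d i ++ map a idx ++ D) B).
  { destruct (Hsub i (in_eq i idx)) as [[-> ->] | Hsubi]; [exact HB|].
    eapply mg_derivable_trans_cond; [exact Hsubi | exact HB]. }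
  rewrite <- app_assoc.
  apply mg_derivable_perm with G (flat_map (fun i => g i ++ d i) idx ++ (g i ++ d i) ++ D);
    [reflexivity | apply Permutation_app_swap_app |].
  apply IH; [auto using in_cons|].
  apply mg_derivable_perm with G ((g i ++ d i) ++ map a idx ++ D);
    [reflexivity | apply Permutation_app_swap_app | now rewrite <- app_assoc].
Qed.

Lemma incl_hyps_child gs cs B s :
  In s (gs ++ cs) -> incl (hyps s) (hyps (App gs cs B)).
Proof.
  intros Hs X HX. simpl. apply in_app_or in Hs as [Hs | Hs]; apply in_or_app;
    [left | right]; apply in_flat_map; eauto.
Qed.

Lemma derivable_concl extra t :
  kappa_steps kappa t -> (forall X, In X (hyps t) -> H X) ->
  derivable kappa extra H (concl t).
Proof.
  induction 1 as [A | gs cs B Hk _ IHg _ IHc]; intros Hhyps; simpl.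
  - apply d_hyp, Hhyps. left. reflexivity.
  - apply d_kappa with (map concl gs) (map concl cs); [exact Hk | |];
      intros X (s & <- & Hs)%in_map_iff; [apply IHg | apply IHc]; auto;
      intros Y HY; apply Hhyps; eapply incl_hyps_child; eauto using in_or_app.
Qed.

Lemma mg_derivable_App gs cs B :
  kappa_steps kappa (App gs cs B) -> (forall X, In X (hyps (App gs cs B)) -> H X) ->
  mg_derivable (map concl gs) (map concl cs) B.
Proof.
  intros Hsteps Hhyps. inversion Hsteps as [| ? ? ? Hk Hg Hc]; subst.
  exists (map concl gs), (map concl cs). repeat split; try reflexivity.
  intros extra. apply d_MG_intro, d_IG_intro; [exact Hk | |];
    intros X (s & <- & Hs)%in_map_iff; apply derivable_concl; auto;
    intros Y HY; apply Hhyps; eapply incl_hyps_child; eauto using in_or_app.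
Qed.

End MediateGrounding.

Definition child (t : gtree) (i : nat) : gtree := nth i (children t) (Hyp Bot).

Lemma subtree_app t p r :
  subtree t (p ++ r) = match subtree t p with Some s => subtree s r | None => None end.
Proof.
  revert t. induction p as [| i p IH]; intros [A | gs cs B]; simpl; auto.
  destruct (nth_error (gs ++ cs) i); auto.
Qed.

Lemma subtree_cons t i q :
  i < length (children t) -> subtree t (i :: q) = subtree (child t i) q.
Proof.
  destruct t as [A | gs cs B]; simpl; intros Hi; [lia|].
  unfold child. simpl. rewrite nth_error_nth' with (d := Hyp Bot) by exact Hi.
  reflexivity.
Qed.

Lemma formula_at_cons t i q :
  i < length (children t) -> formula_at t (i :: q) = formula_at (child t i) q.
Proof. intros Hi. unfold formula_at. rewrite subtree_cons by exact Hi. reflexivity. Qed.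

Lemma in_cond_cons_ground gs cs B i q :
  i < length gs -> in_cond (App gs cs B) (i :: q) = in_cond (child (App gs cs B) i) q.
Proof.
  intros Hi. simpl. rewrite (proj2 (Nat.ltb_lt _ _) Hi).
  rewrite nth_error_nth' with (d := Hyp Bot) by exact Hi.
  unfold child. simpl. rewrite app_nth1 by exact Hi. reflexivity.
Qed.

Lemma in_cond_cons_cond gs cs B i q :
  length gs <= i -> in_cond (App gs cs B) (i :: q) = true.
Proof. intros Hi. simpl. destruct (Nat.ltb_spec i (length gs)); [lia | reflexivity]. Qed.

Fixpoint first_leaf (t : gtree) : position :=
  match t with
  | App (s :: _) _ _ | App [] (s :: _) _ => 0 :: first_leaf s
  | _ => []
  end.

Fixpoint leaf_pos_first_leaf (t : gtree) : leaf_pos t (first_leaf t).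
Proof.
  destruct t as [A | [| s gs] [| s' cs] B]; simpl.
  - exists (Hyp A). auto.
  - exists (App [] [] B). auto.
  - exact (leaf_pos_first_leaf s').
  - exact (leaf_pos_first_leaf s).
  - exact (leaf_pos_first_leaf s).
Qed.

Lemma leaf_pos_below t p : valid_pos t p -> exists r, leaf_pos t (p ++ r).
Proof.
  unfold valid_pos. destruct (subtree t p) as [s |] eqn:Hp; [intros _ | contradiction].
  destruct (leaf_pos_first_leaf s) as (s' & Hs' & Hleaf).
  exists (first_leaf s), s'. rewrite subtree_app, Hp. auto.
Qed.

Lemma is_bar_Hyp A b : ~ is_bar (Hyp A) b.
Proof.
  intros (_ & Hvalid & Hcover).
  destruct (Hcover []) as (p & Hp & (r & Hr) & _); [exists (Hyp A); auto|].
  apply (proj2 (Hvalid p Hp)). now destruct p.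
Qed.

Lemma is_bar_cons t b p :
  is_bar t b -> In p b -> exists i q, p = i :: q /\ i < length (children t).
Proof.
  intros (_ & Hvalid & _) Hp. destruct (Hvalid p Hp) as [Hv Hne].
  destruct p as [| i q]; [contradiction|]. exists i, q. split; [reflexivity|].
  destruct t as [A | gs cs B]; simpl; [now contradiction Hv|].
  apply nth_error_Some. intros E. apply Hv. simpl. rewrite E. reflexivity.
Qed.

Lemma is_bar_antichain t b p r : is_bar t b -> In p b -> In (p ++ r) b -> r = [].
Proof.
  intros Hbar Hp Hpr. destruct Hbar as (_ & Hvalid & Hcover).
  destruct (leaf_pos_below t (p ++ r)) as (r' & Hleaf); [apply Hvalid, Hpr|].
  destruct (Hcover _ Hleaf) as (p0 & _ & _ & Huniq).
  assert (Hsame : p ++ [] = p ++ r).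
  { rewrite app_nil_r. transitivity p0; [| symmetry]; apply Huniq; auto.
    - exists (r ++ r'). symmetry. apply app_assoc.
    - exists r'. reflexivity. }
  symmetry. exact (app_inv_head _ _ _ Hsame).
Qed.

Fixpoint branch (i : nat) (b : list position) : list position :=
  match b with
  | [] => []
  | (j :: q) :: b' => if i =? j then q :: branch i b' else branch i b'
  | [] :: b' => branch i b'
  end.

Lemma in_branch i q b : In q (branch i b) <-> In (i :: q) b.
Proof.
  induction b as [| [| j q'] b IH]; simpl; [tauto | rewrite IH; intuition congruence |].
  destruct (Nat.eqb_spec i j) as [-> | Hij]; simpl; rewrite IH; intuition congruence.
Qed.

Lemma NoDup_branch i b : NoDup b -> NoDup (branch i b).
Proof.
  induction 1 as [| [| j q] b Hnot _ IH]; simpl; [constructor | exact IH |].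
  destruct (Nat.eqb_spec i j) as [-> | _]; [| exact IH].
  constructor; [rewrite in_branch; exact Hnot | exact IH].
Qed.

Lemma branch_top t b i : is_bar t b -> In [i] b -> branch i b = [[]].
Proof.
  intros Hbar Hi.
  assert (Hall : forall q, In q (branch i b) -> q = []).
  { intros q Hq. apply in_branch in Hq. exact (is_bar_antichain t b [i] q Hbar Hi Hq). }
  assert (Hnd : NoDup (branch i b)) by (apply NoDup_branch, Hbar).
  assert (Hnil : In [] (branch i b)) by (apply in_branch, Hi).
  destruct (branch i b) as [| q [| q' l]];
    [destruct Hnil | now rewrite (Hall q) by now left |].
  inversion Hnd as [| ? ? Hq _]. subst.
  exfalso. apply Hq. left. rewrite (Hall q), (Hall q'); auto using in_eq, in_cons.
Qed.

Lemma is_bar_branch t b i :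
  is_bar t b -> i < length (children t) -> ~ In [i] b -> is_bar (child t i) (branch i b).
Proof.
  intros Hbar Hi Htop. pose proof Hbar as (Hnd & Hvalid & Hcover).
  split; [apply NoDup_branch, Hnd | split].
  - intros q Hq%in_branch. destruct (Hvalid _ Hq) as [Hv _]. split.
    + unfold valid_pos. rewrite <- subtree_cons by exact Hi. exact Hv.
    + intros ->. contradiction.
  - intros q (s & Hs & Hleaf).
    destruct (Hcover (i :: q)) as (p & Hp & (r & Hr) & Huniq).
    { exists s. rewrite subtree_cons by exact Hi. auto. }
    destruct (is_bar_cons t b p Hbar Hp) as (j & p0 & -> & _).
    injection Hr as <- Hr.
    exists p0. split; [apply in_branch, Hp | split; [exists r; exact Hr |]].
    intros p' Hp'%in_branch (r' & Hr').
    assert (Heq : i :: p' = i :: p0)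
      by (apply Huniq; [exact Hp' | exists r'; now rewrite Hr']).
    now injection Heq.
Qed.

Lemma Permutation_branches n b :
  (forall p, In p b -> exists i q, p = i :: q /\ i < n) ->
  Permutation b (flat_map (fun i => map (cons i) (branch i b)) (seq 0 n)).
Proof.
  induction b as [| p b IH]; intros Hb; simpl.
  - induction (seq 0 n); simpl; auto.
  - destruct (Hb p (in_eq p b)) as (j & q & -> & Hj).
    transitivity ((j :: q) :: flat_map (fun i => map (cons i) (branch i b)) (seq 0 n)).
    + apply perm_skip, IH. intros p Hp. apply Hb, in_cons, Hp.
    + symmetry. etransitivity;
        [| apply (Permutation_flat_map_insert (j :: q) _ j);
           [apply seq_NoDup | apply in_seq; lia]].
      apply Permutation_flat_map_ext. intros i _.
      destruct (Nat.eqb_spec i j) as [-> |]; reflexivity.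
Qed.

Lemma bar_grounds_app t l l' : bar_grounds t (l ++ l') = bar_grounds t l ++ bar_grounds t l'.
Proof. unfold bar_grounds. now rewrite filter_app, map_app. Qed.

Lemma bar_conds_app t l l' : bar_conds t (l ++ l') = bar_conds t l ++ bar_conds t l'.
Proof. unfold bar_conds. now rewrite filter_app, map_app. Qed.

Lemma bar_grounds_flat_map t (f : nat -> list position) idx :
  bar_grounds t (flat_map f idx) = flat_map (fun i => bar_grounds t (f i)) idx.
Proof.
  induction idx as [| i idx IH]; simpl; [reflexivity|].
  now rewrite bar_grounds_app, IH.
Qed.

Lemma bar_conds_flat_map t (f : nat -> list position) idx :
  bar_conds t (flat_map f idx) = flat_map (fun i => bar_conds t (f i)) idx.
Proof.
  induction idx as [| i idx IH]; simpl; [reflexivity|].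
  now rewrite bar_conds_app, IH.
Qed.

Lemma Permutation_bar_grounds t b b' :
  Permutation b b' -> Permutation (bar_grounds t b) (bar_grounds t b').
Proof. intros Hb. apply Permutation_map, Permutation_filter, Hb. Qed.

Lemma Permutation_bar_conds t b b' :
  Permutation b b' -> Permutation (bar_conds t b) (bar_conds t b').
Proof. intros Hb. apply Permutation_map, Permutation_filter, Hb. Qed.

Lemma Permutation_formula_at_partition t P :
  Permutation (map (formula_at t) P) (bar_grounds t P ++ bar_conds t P).
Proof. apply Permutation_map_filter_partition. Qed.

Section Node.

Variables (gs cs : list gtree) (B : form).
Local Notation t := (App gs cs B).

Lemma length_children_App : length (children t) = length gs + length cs.
Proof. apply length_app. Qed.

Lemma map_child_seq_grounds : map (child t) (seq 0 (length gs)) = gs.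
Proof. exact (map_nth_seq_app (Hyp Bot) [] gs cs). Qed.

Lemma map_child_seq_conds : map (child t) (seq (length gs) (length cs)) = cs.
Proof.
  pose proof (map_nth_seq_app (Hyp Bot) gs cs []) as E.
  rewrite app_nil_r in E. exact E.
Qed.

Lemma bar_grounds_cons_ground i P :
  i < length gs -> bar_grounds t (map (cons i) P) = bar_grounds (child t i) P.
Proof.
  intros Hi. unfold bar_grounds. rewrite filter_map_swap, map_map.
  rewrite (filter_ext _ (fun q => negb (in_cond (child t i) q)))
    by (intros q; now rewrite in_cond_cons_ground).
  apply map_ext. intros q. apply formula_at_cons. rewrite length_children_App. lia.
Qed.

Lemma bar_conds_cons_ground i P :
  i < length gs -> bar_conds t (map (cons i) P) = bar_conds (child t i) P.
Proof.
  intros Hi. unfold bar_conds. rewrite filter_map_swap, map_map.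
  rewrite (filter_ext _ (in_cond (child t i))) by (intros q; now rewrite in_cond_cons_ground).
  apply map_ext. intros q. apply formula_at_cons. rewrite length_children_App. lia.
Qed.

Lemma bar_grounds_cons_cond i P : length gs <= i -> bar_grounds t (map (cons i) P) = [].
Proof.
  intros Hi. unfold bar_grounds. rewrite filter_map_swap.
  rewrite (filter_ext _ (fun _ => false)) by (intros q; now rewrite in_cond_cons_cond).
  induction P; auto.
Qed.

Lemma bar_conds_cons_cond i P :
  length gs <= i < length gs + length cs ->
  bar_conds t (map (cons i) P) = map (formula_at (child t i)) P.
Proof.
  intros Hi. unfold bar_conds. rewrite filter_map_swap, map_map.
  rewrite (filter_ext _ (fun _ => true)), filter_true
    by (intros q; now rewrite in_cond_cons_cond by lia).
  apply map_ext. intros q. apply formula_at_cons. rewrite length_children_App. lia.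
Qed.

Lemma Permutation_bar_App_branches b :
  is_bar t b ->
  Permutation b (flat_map (fun i => map (cons i) (branch i b))
                  (seq 0 (length gs) ++ seq (length gs) (length cs))).
Proof.
  intros Hbar. rewrite <- seq_app. apply Permutation_branches.
  rewrite <- length_children_App. intros p Hp. exact (is_bar_cons t b p Hbar Hp).
Qed.

Lemma bar_grounds_App b :
  is_bar t b ->
  Permutation (bar_grounds t b)
    (flat_map (fun i => bar_grounds (child t i) (branch i b)) (seq 0 (length gs))).
Proof.
  intros Hbar. rewrite (Permutation_bar_grounds t _ _ (Permutation_bar_App_branches b Hbar)).
  rewrite bar_grounds_flat_map, flat_map_app, <- app_nil_r.
  apply Permutation_app.
  - apply Permutation_flat_map_ext. intros i Hi%in_seq.
    now rewrite bar_grounds_cons_ground by lia.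
  - etransitivity; [apply Permutation_flat_map_ext with (g := fun _ => []) |].
    + intros i Hi%in_seq. now rewrite bar_grounds_cons_cond by lia.
    + now induction (seq (length gs) (length cs)).
Qed.

Lemma bar_conds_App b :
  is_bar t b ->
  Permutation (bar_conds t b)
    (flat_map (fun i => bar_conds (child t i) (branch i b)) (seq 0 (length gs)) ++
     flat_map (fun i => bar_grounds (child t i) (branch i b) ++
                        bar_conds (child t i) (branch i b)) (seq (length gs) (length cs))).
Proof.
  intros Hbar. rewrite (Permutation_bar_conds t _ _ (Permutation_bar_App_branches b Hbar)).
  rewrite bar_conds_flat_map, flat_map_app.
  apply Permutation_app; apply Permutation_flat_map_ext; intros i Hi%in_seq.
  - now rewrite bar_conds_cons_ground by lia.
  - rewrite bar_conds_cons_cond by lia. apply Permutation_formula_at_partition.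
Qed.

End Node.

Lemma mg_derivable_bar_App kappa H gs cs B b :
  let s := child (App gs cs B) in
  is_bar (App gs cs B) b ->
  (forall i, i < length gs + length cs ->
     mg_derivable_refl kappa H (bar_grounds (s i) (branch i b))
       (bar_conds (s i) (branch i b)) (concl (s i))) ->
  mg_derivable kappa H (map concl gs) (map concl cs) B ->
  mg_derivable kappa H (bar_grounds (App gs cs B) b) (bar_conds (App gs cs B) b) B.
Proof.
  intros s Hbar Hchildren Hroot.
  assert (Hroot_s : mg_derivable kappa H (map (fun i => concl (s i)) (seq 0 (length gs)))
                      (map (fun i => concl (s i)) (seq (length gs) (length cs))) B).
  { rewrite <- !(map_map s concl). unfold s.
    rewrite map_child_seq_grounds, map_child_seq_conds. exact Hroot. }
  set (g := fun i => bar_grounds (s i) (branch i b)).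
  set (d := fun i => bar_conds (s i) (branch i b)).
  apply mg_derivable_perm with
    (flat_map g (seq 0 (length gs)) ++ [])
    (flat_map d (seq 0 (length gs)) ++
     flat_map (fun i => g i ++ d i) (seq (length gs) (length cs)) ++ []).
  - rewrite app_nil_r. symmetry. apply bar_grounds_App, Hbar.
  - rewrite app_nil_r. symmetry. apply bar_conds_App, Hbar.
  - apply mg_derivable_subst_grounds with (fun i => concl (s i)).
    + intros i Hi%in_seq. apply Hchildren. lia.
    + rewrite app_nil_r. apply mg_derivable_subst_conds with (fun i => concl (s i)).
      * intros i Hi%in_seq. apply Hchildren. lia.
      * rewrite app_nil_r. exact Hroot_s.
Qed.

Lemma mg_derivable_bar kappa H t :
  kappa_steps kappa t -> (forall X, In X (hyps t) -> H X) ->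
  forall b, is_bar t b -> mg_derivable kappa H (bar_grounds t b) (bar_conds t b) (concl t).
Proof.
  induction 1 as [A | gs cs B Hk Hg IHg Hc IHc]; intros Hhyps b Hbar;
    [now apply is_bar_Hyp in Hbar |].
  apply mg_derivable_bar_App; [exact Hbar | | apply mg_derivable_App; [constructor |]; auto].
  intros i Hi. set (s := child (App gs cs B) i).
  destruct (in_dec (list_eq_dec Nat.eq_dec) [i] b) as [Htop | Hnot].
  - left. rewrite (branch_top _ _ _ Hbar Htop). split; reflexivity.
  - right.
    assert (Hin : In s (gs ++ cs)) by (apply nth_In; rewrite length_app; exact Hi).
    assert (Hbar_s : is_bar s (branch i b))
      by (apply is_bar_branch;
          [exact Hbar | rewrite length_children_App; exact Hi | exact Hnot]).
    assert (Hhyps_s : forall X, In X (hyps s) -> H X)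
      by (intros X HX; apply Hhyps, (incl_hyps_child gs cs B _ Hin), HX).
    apply in_app_or in Hin as [Hin | Hin]; [apply IHg | apply IHc]; assumption.
Qed.

Theorem mainTheorem1 (kappa : grounding_calculus) (delta : gtree) (A : form)
    (bar : list position) :
  grounding_derivation kappa delta A ->
  is_bar delta bar ->
  exists Gamma Delta : list form,
    Permutation Gamma (bar_grounds delta bar) /\
    Permutation Delta (bar_conds delta bar) /\
    forall extra : list form -> form -> Prop,
      derivable kappa extra (fun X => In X (hyps delta)) (MG Gamma Delta A).
Proof.
  intros (Hsteps & _ & gs & cs & ->) Hbar.
  exact (mg_derivable_bar kappa _ _ Hsteps (fun X HX => HX) bar Hbar).
Qed.
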